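(* Let $0\le q\le N$, $n\ge 1$, let $\alpha\in E_0^q$ with $d^q_0\alpha=0$, and let $\tilde\alpha$ be an $(n-1)$-th order extension of $\alpha$. Let $i$ be an integer with $0<i\le n$. Then there exists an $n$-th order extension $\hat\alpha$ of $\alpha$ with $\hat\alpha-\tilde\alpha\in t^i\mathcal{E}_0^q$ if and only if $o^q_{n,n-i}([\tilde\alpha \bmod t^n])=0$ in $H^{q+1}(\mathcal{E}_0^\bullet\otimes_{\mathcal{O}}\mathcal{O}/\mathfrak{m}_0^{n-i+1})$.
   Context: Setting. Let $B$ be a one-dimensional complex manifold (a disc) with holomorphic coordinate $t$ centred at a point $0\in B$; write $\mathcal{O}=\mathcal{O}_{B,0}$ and $\mathfrak{m}_0=t\mathcal{O}$ for its maximal ideal. Let $(E^\bullet,d^\bullet)$: $0\to E^0\xrightarrow{d^0}E^1\xrightarrow{d^1}\cdots\xrightarrow{d^{N-1}}E^N\to 0$ be a bounded complex of holomorphic vector bundles on $B$ whose differentials are $\mathcal{O}_B$-linear holomorphic bundle maps with $d^{q+1}\circ d^q=0$. For $s\in B$, $E_s^\bullet$ denotes the fibre complex (with differentials $d^q_s$) and $H^q(E_s)=\ker d^q_s/\mathrm{im}\, d^{q-1}_s$. Let $\mathcal{E}_0^q$ be the stalk at $0$ of the sheaf of holomorphic sections of $E^q$; for a germ $s$, $s(0)$ is its value at $0$. For $n\ge1$, $\mathcal{E}_0^\bullet\otimes_{\mathcal{O}}\mathcal{O}/\mathfrak{m}_0^n$ is the induced truncated complex with cohomology $H^q(\mathcal{E}_0^\bullet\otimes_{\mathcal{O}}\mathcal{O}/\mathfrak{m}_0^n)$.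 Extensions. For $\alpha\in\ker d^q_0$ and $k\ge0$, a $k$-th order extension of $\alpha$ is a germ $\tilde\alpha\in\mathcal{E}_0^q$ with $\tilde\alpha(0)=\alpha$ and $d^q\tilde\alpha\in t^{k+1}\mathcal{E}_0^{q+1}$ (i.e. the $k$-jet of $d^q\tilde\alpha$ at $0$ vanishes); its reduction mod $t^{k+1}$ defines a class $[\tilde\alpha \bmod t^{k+1}]\in H^q(\mathcal{E}_0^\bullet\otimes\mathcal{O}/\mathfrak{m}_0^{k+1})$. Obstruction maps. $o_n^q:H^q(\mathcal{E}_0^\bullet\otimes\mathcal{O}/\mathfrak{m}_0^n)\to H^{q+1}(E_0)$ sends the class of $\tilde\alpha \bmod t^n$ (where $\tilde\alpha\in\mathcal{E}_0^q$ with $d^q\tilde\alpha\in t^n\mathcal{E}_0^{q+1}$) to the class of $(t^{-n}d^q\tilde\alpha)(0)$ (this is well defined). For $i\ge 0$, $\rho_i^q:H^q(E_0)\to H^q(\mathcal{E}_0^\bullet\otimes\mathcal{O}/\mathfrak{m}_0^{i+1})$ is $[\sigma]\mapsto[t^i\tilde\sigma \bmod t^{i+1}]$, where $\tilde\sigma$ is any germ with $\tilde\sigma(0)=\sigma$. For $0\le i\le n$ set $o^q_{n,i}=\rho_i^{q+1}\circ o_n^q: H^q(\mathcal{E}_0^\bullet\otimes\mathcal{O}/\mathfrak{m}_0^n)\to H^{q+1}(\mathcal{E}_0^\bullet\otimes\mathcal{O}/\mathfrak{m}_0^{i+1})$. *)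

(* Stalk-level (algebraic) model of the setting:
   O = stalk ring (abstracted as an integral domain), t = the coordinate
   (a nonzero element), E^q_0 = O^(r q) (row vectors; stalk of a rank r q
   holomorphic vector bundle after trivialisation), d^q = an O-matrix acting
   on row vectors, v |-> v *m d^q. *)
From HB Require Import structures.
From mathcomp Require Import all_boot all_order all_algebra.
Set Implicit Arguments. Unset Strict Implicit. Unset Printing Implicit Defensive.
Import GRing.Theory.
Local Open Scope ring_scope.

(* v \in t^k E  (the k-jet of v at 0 vanishes) *)
Definition tdiv (O : comRingType) (t : O) (k : nat) (m : nat) (v : 'rV[O]_m) : Prop :=
  exists w : 'rV[O]_m, v = t ^+ k *: w.

(* alpha (a germ representing a point alpha(0) of the fibre E_0^q) satisfies
   d^q_0 (alpha(0)) = 0, i.e. d^q alpha vanishes at 0 *)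
Definition fibre_cocycle (O : comRingType) (t : O) (m p : nat)
  (dq : 'M[O]_(m, p)) (alpha : 'rV[O]_m) : Prop :=
  tdiv t 1 (alpha *m dq).

(* atil is a k-th order extension of (the fibre value alpha(0) of) alpha:
   atil(0) = alpha(0) and d^q atil \in t^(k+1) E^(q+1) *)
Definition is_extension (O : comRingType) (t : O) (m p : nat)
  (dq : 'M[O]_(m, p)) (alpha : 'rV[O]_m) (k : nat) (atil : 'rV[O]_m) : Prop :=
  tdiv t 1 (atil - alpha) /\ tdiv t k.+1 (atil *m dq).

(* The class of the cocycle v in H^(q+1)(E_0 (x) O/m^l) is zero:
   v = d^q x  mod t^l  for some x in E^q. *)
Definition cohom_zero (O : comRingType) (t : O) (m p : nat)
  (dq : 'M[O]_(m, p)) (l : nat) (v : 'rV[O]_p) : Prop :=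
  exists x : 'rV[O]_m, tdiv t l (v - x *m dq).

(* o^q_{n,j}([atil mod t^n]) = 0 in H^(q+1)(E_0 (x) O/m^(j+1)):
   o_n^q([atil mod t^n]) is the class of gamma(0) where d^q atil = t^n gamma;
   rho_j^(q+1) sends it (using the lift gamma of gamma(0)) to the class of
   t^j gamma mod t^(j+1). *)
Definition obstr_vanishes (O : comRingType) (t : O) (m p : nat)
  (dq : 'M[O]_(m, p)) (n j : nat) (atil : 'rV[O]_m) : Prop :=
  exists gamma : 'rV[O]_p,
    atil *m dq = t ^+ n *: gamma /\ cohom_zero t dq j.+1 (t ^+ j *: gamma).

From HB Require Import structures.
From mathcomp Require Import all_boot all_order all_algebra.
Import GRing.Theory.
Local Open Scope ring_scope.

(* Write d^q atil = t^n g (atil is an (n-1)-th order extension)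
   and j = n - i.  Every candidate ahat with ahat - atil in t^i E^q has the
   form atil + t^i y, and it is again an extension of alpha because i > 0.
   Its differential is
       (atil + t^i y) d^q = t^i (t^j g + y d^q),
   and since t is a nonzerodivisor, multiplication by t^i shifts the
   t-adic filtration exactly: the left side lies in t^(n+1) E^(q+1) iff
   t^j g + y d^q lies in t^(j+1) E^(q+1).  Replacing y by -y, the existence
   of such a y is precisely the vanishing of the class of t^j g in
   H^(q+1)(E_0 (x) O/m^(j+1)), i.e. o_{n,j}([atil mod t^n]) = 0; the element
   gamma in the definition of the obstruction is forced to equal g, again
   by cancellation of t^n. *)

Section Filtration.
Context {O : idomainType} {t : O}.
Hypothesis ht : t != 0.

Lemma scale_texp_inj (k m : nat) (a b : 'rV[O]_m) :
  t ^+ k *: a = t ^+ k *: b -> a = b.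
Proof.
move=> eq_ab; apply/rowP => j.
have := congr1 (fun v : 'rV[O]_m => v 0 j) eq_ab; rewrite /= !mxE.
by apply: mulfI; rewrite expf_neq0.
Qed.

Lemma tdiv_shift (i k m : nat) (v : 'rV[O]_m) :
  tdiv t (i + k) (t ^+ i *: v) <-> tdiv t k v.
Proof.
split=> [[w hw] | [w ->]]; last by exists w; rewrite scalerA -exprD.
exists w; apply: (@scale_texp_inj i).
by rewrite hw scalerA -exprD.
Qed.

End Filtration.

Lemma tdiv_mono (O : comNzRingType) (t : O) (k l m : nat) (v : 'rV[O]_m) :
  (k <= l)%N -> tdiv t l v -> tdiv t k v.
Proof.
move=> /subnKC <- [w ->].
by exists (t ^+ (l - k) *: w); rewrite scalerA -exprD.
Qed.

Lemma tdivD (O : comNzRingType) (t : O) (k m : nat) (a b : 'rV[O]_m) :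
  tdiv t k a -> tdiv t k b -> tdiv t k (a + b).
Proof. by move=> [u ->] [w ->]; exists (u + w); rewrite scalerDr. Qed.

Lemma cohom_zeroP (O : comNzRingType) (t : O) (m p : nat) (D : 'M[O]_(m, p))
  (l : nat) (v : 'rV[O]_p) :
  cohom_zero t D l v <-> exists y : 'rV[O]_m, tdiv t l (v + y *m D).
Proof.
split=> [[x hx] | [y hy]].
  by exists (- x); rewrite mulNmx.
by exists (- y); rewrite mulNmx opprK.
Qed.

Section Correction.
Context {O : idomainType} {t : O} {m p : nat} {D : 'M[O]_(m, p)}.
Hypothesis ht : t != 0.
Context {alpha atil : 'rV[O]_m} {n i : nat} {g : 'rV[O]_p}.
Hypothesis atil_extends : tdiv t 1 (atil - alpha).
Hypothesis datil : atil *m D = t ^+ n *: g.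
Hypotheses (i_gt0 : (0 < i)%N) (i_le_n : (i <= n)%N).

Lemma d_correction (y : 'rV[O]_m) :
  (atil + t ^+ i *: y) *m D = t ^+ i *: (t ^+ (n - i) *: g + y *m D).
Proof.
by rewrite mulmxDl datil -scalemxAl scalerDr scalerA -exprD subnKC.
Qed.

Lemma correction_extension (y : 'rV[O]_m) :
  is_extension t D alpha n (atil + t ^+ i *: y)
  <-> tdiv t (n - i).+1 (t ^+ (n - i) *: g + y *m D).
Proof.
have shift := tdiv_shift ht i (n - i).+1 _ (t ^+ (n - i) *: g + y *m D).
rewrite addnS subnKC // in shift.
rewrite /is_extension d_correction.
split=> [[_ /shift] // | /shift hdiv]; split=> //.
rewrite addrAC; apply: tdivD atil_extends _.
by apply: (@tdiv_mono _ _ 1 i) => //; exists y.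
Qed.

Lemma obstr_vanishesP :
  obstr_vanishes t D n (n - i) atil
  <-> cohom_zero t D (n - i).+1 (t ^+ (n - i) *: g).
Proof.
split=> [[gamma [dgamma hz]] | hz]; last by exists g.
suff -> : g = gamma by [].
by apply: (scale_texp_inj ht n); rewrite -datil dgamma.
Qed.

End Correction.

Theorem proposition2p3 (O : idomainType) (t : O) (ht : t != 0)
  (N : nat) (r : nat -> nat) (d : forall q : nat, 'M[O]_(r q, r q.+1))
  (hbound : forall q : nat, (N < q)%N -> r q = 0%N)
  (hcomplex : forall q : nat, d q *m d q.+1 = 0)
  (q n : nat) (hq : (q <= N)%N) (hn : (1 <= n)%N)
  (alpha : 'rV[O]_(r q)) (halpha : fibre_cocycle t (d q) alpha)
  (atil : 'rV[O]_(r q)) (hatil : is_extension t (d q) alpha n.-1 atil)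
  (i : nat) (hi : (0 < i <= n)%N) :
  (exists ahat : 'rV[O]_(r q),
      is_extension t (d q) alpha n ahat /\ tdiv t i (ahat - atil))
  <-> obstr_vanishes t (d q) n (n - i) atil.
Proof.
case/andP: hi => i_gt0 i_le_n.
case: hatil => [atil_extends [g datil]]; rewrite prednK // in datil.
have ext := correction_extension ht atil_extends datil i_gt0 i_le_n.
have obstr := obstr_vanishesP ht datil.
split=> [[ahat [ext_ahat [y hy]]] | /obstr/cohom_zeroP [y hy]].
- apply/obstr/cohom_zeroP; exists y; apply/ext.
  by rewrite -hy addrC subrK.
- exists (atil + t ^+ i *: y); split; first exact/ext.
  by exists y; rewrite addrC addKr.
Qed.
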